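(* Let $\ell\ge2$ be an integer and let $n$ be a positive divisor of $3^\ell+1$ with $2n>3^{\lceil \ell/2\rceil}+1$. Then $\mathrm{ord}_{2n}(3)=2\ell$.
   Context: $\mathrm{ord}_M(3)$ is the multiplicative order of $3$ modulo $M$. *)

From mathcomp Require Import all_boot.

Definition is_mult_order (M a k : nat) : Prop :=
  0 < k /\ a ^ k = 1 %[mod M] /\
  (forall j, 0 < j -> j < k -> a ^ j <> 1 %[mod M]).

From mathcomp Require Import all_boot.
From mathcomp Require Import zify.

(* Since n | 3^l + 1 and 3^l - 1 is even, 3^(2l) = 1 modulo 2n.  If also
   3^j = 1 modulo 2n with 0 < j < 2l, then g = gcd(2l, j) is a proper divisor
   of 2l with 3^g = 1 modulo n.  If g | l, then 3^l is both 1 and -1 modulo n,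
   so n | 2.  Otherwise g = 2e and l = k e with k >= 3 odd, so
   3^l = 3^e (3^(2e))^((k-1)/2) = 3^e modulo n and n | 3^e + 1.  Either way
   n | 3^e + 1 for some e < ceil(l/2), which forces 2n <= 3^ceil(l/2) + 1. *)

Lemma expnM_mod1 a y u m : a ^ y = 1 %[mod m] -> a ^ (y * u) = 1 %[mod m].
Proof. by move=> a_y; rewrite expnM -modnXm a_y modnXm exp1n. Qed.

Lemma expn_gcdn_mod1 a x y m : 0 < x ->
  a ^ x = 1 %[mod m] -> a ^ y = 1 %[mod m] -> a ^ gcdn x y = 1 %[mod m].
Proof.
move=> x_gt0 a_x a_y; have [u _ /dvdnP [c Ec]] := Bezoutl y x_gt0.
have a_uy : a ^ (gcdn x y + u * y) = a ^ gcdn x y %[mod m].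
  by rewrite expnD [u * y]mulnC -modnMmr expnM_mod1 // modnMmr muln1.
by rewrite -a_uy Ec mulnC expnM_mod1.
Qed.

Lemma expn_double_mod1 a l n : odd a -> n %| a ^ l + 1 ->
  a ^ (2 * l) = 1 %[mod 2 * n].
Proof.
move=> odd_a n_dvd; apply/eqP; rewrite eqn_mod_dvd ?expn_gt0 ?odd_gt0 //.
have -> : a ^ (2 * l) - 1 = (a ^ l - 1) * (a ^ l + 1).
  by rewrite -subn_sqr exp1n -expnM mulnC.
by apply: dvdn_mul => //; rewrite dvdn2 oddB ?expn_gt0 ?odd_gt0 // oddX odd_a orbT.
Qed.

Lemma dvdn2_mod1_addn1 x n : x = 1 %[mod n] -> n %| x + 1 -> n %| 2.
Proof. by move=> x1; rewrite /dvdn -modnDml x1 modnDml. Qed.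

Lemma expn_oddM_mod a e k n : a ^ (2 * e) = 1 %[mod n] -> odd k ->
  a ^ (k * e) = a ^ e %[mod n].
Proof.
move=> a_2e odd_k; rewrite -(odd_double_half k) odd_k -mul2n.
by rewrite mulnDl mul1n expnD -modnMmr mulnAC expnM_mod1 // modnMmr muln1.
Qed.

Lemma dvdn_exp_addn1_lt_half {a l n g} :
  0 < l -> 0 < g -> g %| 2 * l -> g < 2 * l ->
  n %| a ^ l + 1 -> a ^ g = 1 %[mod n] ->
  exists2 e, e < (l.+1)./2 & n %| a ^ e + 1.
Proof.
move=> l_gt0 g_gt0 /dvdnP [k Ek] g_lt n_dvd a_g.
have [odd_k | even_k] := boolP (odd k); last first.
  exists 0; first by lia.
  have Ek2 := odd_double_half k; rewrite (negbTE even_k) add0n in Ek2.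
  have El : l = g * k./2 by lia.
  by apply: dvdn2_mod1_addn1 n_dvd; rewrite El expnM_mod1.
have even_g : ~~ odd g.
  by have := congr1 odd Ek; rewrite !oddM odd_k /= => <-.
have Eg := odd_double_half g; rewrite (negbTE even_g) add0n -mul2n in Eg.
have El : l = k * g./2 by nia.
exists g./2; last first.
  have a_2h : a ^ (2 * g./2) = 1 %[mod n] by rewrite Eg.
  by move: n_dvd; rewrite /dvdn -modnDml El expn_oddM_mod // modnDml.
have Ek2 := odd_double_half k; rewrite odd_k in Ek2.
have k_gt1 : 1 < k by rewrite -(ltn_pmul2r g_gt0) mul1n -Ek.
nia.
Qed.

Lemma dvdn_exp_addn1_double_le {a n e c} : 2 < a -> n %| a ^ e + 1 -> e < c ->
  2 * n <= a ^ c + 1.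
Proof.
move=> a_gt2 /dvdn_leq; rewrite addn1 => /(_ isT) n_le e_lt.
have := leq_pexp2l (ltnW (ltnW a_gt2)) e_lt; have := expn_gt0 a e.
rewrite expnS; nia.
Qed.

Theorem lemma19 (l n : nat) :
  2 <= l -> 0 < n -> n %| 3 ^ l + 1 ->
  3 ^ (l.+1)./2 + 1 < 2 * n ->
  is_mult_order (2 * n) 3 (2 * l).
Proof.
move=> l_ge2 n_gt0 n_dvd n_big.
have l_gt0 : 0 < l by lia.
have three_2l : 3 ^ (2 * l) = 1 %[mod 2 * n] by apply: expn_double_mod1.
split; first by rewrite muln_gt0. split=> // j j_gt0 j_lt three_j.
have g_gt0 : 0 < gcdn (2 * l) j by rewrite gcdn_gt0 j_gt0 orbT.
have three_g : 3 ^ gcdn (2 * l) j = 1 %[mod 2 * n].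
  by apply: expn_gcdn_mod1 three_j; rewrite ?muln_gt0.
have three_g_n : 3 ^ gcdn (2 * l) j = 1 %[mod n].
  by rewrite -(modn_dvdm _ (dvdn_mull 2 (dvdnn n))) three_g modn_dvdm // dvdn_mull.
have g_lt : gcdn (2 * l) j < 2 * l.
  exact: leq_ltn_trans (dvdn_leq j_gt0 (dvdn_gcdr _ _)) j_lt.
have [e e_lt e_dvd] :=
  dvdn_exp_addn1_lt_half l_gt0 g_gt0 (dvdn_gcdl _ _) g_lt n_dvd three_g_n.
by have := dvdn_exp_addn1_double_le (ltnSn 2) e_dvd e_lt; rewrite leqNgt n_big.
Qed.
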